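(* Let $d\ge1$, let $v\in(\Sigma^d)^*$ be nonempty, let $r\in[0,d-1]$ and let $w$ be the length-$r$ prefix of $v$. Then $\downarrow_{\preceq_d}(v^*w)=\{u\in\Sigma^*\mid |u|\equiv r \pmod d \text{ and } \kappa_d(u)(i)\subseteq\kappa_d(v)(i)\text{ for all }i\in[1,d]\}$.
   Context: $u\preceq_d v$ iff $v$ arises from $u$ by inserting factors whose lengths are divisible by $d$, i.e. $u=u_0\cdots u_n$ and $v=u_0v_1u_1\cdots v_nu_n$ with $d\mid |v_i|$. For $w\in\Sigma^*$ and $i\in[1,d]$, $\kappa_d(w)(i)$ is the set of letters $a\in\Sigma$ that occur in $w$ at some position $p$ (positions numbered from $1$) with $p\equiv i\pmod d$. $\downarrow_{\preceq_d}S=\{x\mid\exists s\in S: x\preceq_d s\}$. *)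

From mathcomp Require Import all_boot.
Set Implicit Arguments. Unset Strict Implicit. Unset Printing Implicit Defensive.

(* u ⪯_d v : v = u0 v1 u1 ... vn un where u = u0 u1 ... un and d | |v_i|.
   The decomposition is given by u0 and the list of pairs (v_i, u_i), i=1..n. *)
Definition subword_d (T : Type) (d : nat) (u v : seq T) : Prop :=
  exists (u0 : seq T) (ps : seq (seq T * seq T)),
    [/\ u = u0 ++ flatten (map snd ps),
        v = u0 ++ flatten (map (fun p => p.1 ++ p.2) ps)
      & all (fun p => d %| size p.1) ps].

Definition down_d (T : Type) (d : nat) (S : seq T -> Prop) : seq T -> Prop :=
  fun x => exists s, S s /\ subword_d d x s.

(* κ_d(w)(i): letters occurring in w at a position p (numbered from 1)
   with p ≡ i (mod d). Position j+1 corresponds to 0-based index j. *)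
Definition kappa (T : finType) (d : nat) (w : seq T) (i : nat) : {set T} :=
  [set a | [exists j : 'I_(size w), (j.+1 == i %[mod d]) && (tnth (in_tuple w) j == a)]].

Definition star_cat (T : Type) (v w : seq T) : seq T -> Prop :=
  fun x => exists k, x = flatten (nseq k v) ++ w.

From mathcomp Require Import all_boot zify.
Set Implicit Arguments. Unset Strict Implicit. Unset Printing Implicit Defensive.

(* Inserting blocks whose lengths are multiples of d moves no letter off its
   residue class of positions, so every subword of v^k w has length r mod d
   and its letters at positions = i mod d occur in v at positions = i mod d.
   Conversely, such a u embeds into v^|u| w letter by letter: the j-th letter
   of u is read in the j-th copy of v at a position of the right residue,
   and what lies between two consecutive chosen letters is a block of length
   divisible by d. *)

Lemma eqn_modS d m n : (m.+1 == n.+1 %[mod d]) = (m == n %[mod d]).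
Proof. by rewrite -[m.+1]addn1 -[n.+1]addn1 eqn_modDr. Qed.

Section Subword.
Variables (T : Type) (d : nat).

Lemma subword_d_refl (x : seq T) : subword_d d x x.
Proof. by exists x, [::]; rewrite /= cats0. Qed.

Lemma subword_d_nil (g : seq T) : d %| size g -> subword_d d [::] g.
Proof. by move=> dg; exists [::], [:: (g, [::])]; rewrite /= !cats0 dg. Qed.

Lemma subword_d_cat (x1 s1 x2 s2 : seq T) :
  subword_d d x1 s1 -> subword_d d x2 s2 -> subword_d d (x1 ++ x2) (s1 ++ s2).
Proof.
move=> [a1 [ps1 [-> -> A1]]] [a2 [ps2 [-> -> A2]]].
exists a1, (ps1 ++ ([::], a2) :: ps2).
by rewrite !map_cat !flatten_cat /= all_cat /= A1 A2 dvdn0 !catA.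
Qed.

Lemma size_flatten_nseq k (s : seq T) : size (flatten (nseq k s)) = k * size s.
Proof. by elim: k => //= k IH; rewrite size_cat IH mulSn. Qed.

Lemma flatten_nseqSr k (s : seq T) : flatten (nseq k.+1 s) = flatten (nseq k s) ++ s.
Proof. by elim: k => [|k IH] /=; rewrite ?cats0 // -catA -IH. Qed.

End Subword.

Section ResidueEmbedding.
Variables (T : Type) (d : nat) (x0 : T).

Definition mod_embed (x s : seq T) : Prop :=
  size x = size s %[mod d] /\
  forall j, j < size x -> exists2 j', j' < size s &
    j' = j %[mod d] /\ nth x0 x j = nth x0 s j'.

Lemma mod_embed_refl x : mod_embed x x.
Proof. by split=> // j lt_j; exists j. Qed.

Lemma mod_embed_nil g : d %| size g -> mod_embed [::] g.
Proof. by move=> /eqP dg; split=> //=; rewrite mod0n dg. Qed.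

Lemma mod_embed_cat x1 s1 x2 s2 :
  mod_embed x1 s1 -> mod_embed x2 s2 -> mod_embed (x1 ++ x2) (s1 ++ s2).
Proof.
move=> [E1 K1] [E2 K2]; split; first by rewrite !size_cat -modnDm E1 E2 modnDm.
move=> j; rewrite size_cat => lt_j; case: (ltnP j (size x1)) => [lt_j1|le_j1].
  have [j' lt_j' [Ej' Nj']] := K1 j lt_j1.
  by exists j'; rewrite ?size_cat ?ltn_addr // !nth_cat lt_j1 lt_j'.
have [j' lt_j' [Ej' Nj']] := K2 (j - size x1) ltac:(by rewrite ltn_subLR).
exists (size s1 + j'); first by rewrite size_cat ltn_add2l.
split; first by rewrite -modnDm Ej' -E1 modnDm subnKC.
by rewrite !nth_cat ltnNge le_j1 ltnNge leq_addr /= addKn.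
Qed.

Lemma subword_d_mod_embed x s : subword_d d x s -> mod_embed x s.
Proof.
move=> [x1 [ps [-> -> A]]]; apply: mod_embed_cat; first exact: mod_embed_refl.
elim: ps A => [|p ps IH] /=; first by move=> _; exact: mod_embed_refl.
move=> /andP[dp A]; rewrite -catA -[p.2 ++ _]cat0s.
apply: mod_embed_cat; first exact: mod_embed_nil.
by apply: mod_embed_cat; [exact: mod_embed_refl | exact: IH].
Qed.

End ResidueEmbedding.

Section Kappa.
Variables (T : finType) (d : nat) (x0 : T).

Lemma kappaP (w : seq T) i a :
  reflect (exists j, [/\ j < size w, j.+1 = i %[mod d] & nth x0 w j = a])
          (a \in kappa d w i).
Proof.
rewrite inE; apply: (iffP existsP) => [[j /andP[/eqP Ej /eqP Nj]]|[j [lt_j Ej Nj]]].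
  by exists j; rewrite -Nj (tnth_nth x0).
by exists (Ordinal lt_j); rewrite Ej (tnth_nth x0) Nj !eqxx.
Qed.

Lemma eq_kappa_mod (w : seq T) i k : i = k %[mod d] -> kappa d w i = kappa d w k.
Proof. by move=> E; apply: eq_finset => a; rewrite E. Qed.

Lemma kappa_subsetP (u v : seq T) : 0 < d ->
  (forall i, 1 <= i <= d -> kappa d u i \subset kappa d v i) <->
  (forall j, j < size u -> nth x0 u j \in kappa d v j.+1).
Proof.
move=> d_gt0; split=> [sub_uv j lt_j | in_v i _].
  have i_range : 1 <= (j %% d).+1 <= d by rewrite ltn_mod.
  have Ej : j.+1 = (j %% d).+1 %[mod d] by apply/eqP; rewrite eqn_modS modn_mod.
  rewrite (eq_kappa_mod _ Ej); apply: (subsetP (sub_uv _ i_range)).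
  by apply/kappaP; exists j.
apply/subsetP=> a /kappaP[j [lt_j Ej <-]].
by rewrite -(eq_kappa_mod _ Ej); exact: in_v.
Qed.

Lemma mod_embed_kappa_subset (x s : seq T) i :
  mod_embed d x0 x s -> kappa d x i \subset kappa d s i.
Proof.
move=> [_ K]; apply/subsetP=> a /kappaP[j [lt_j Ej <-]].
have [j' lt_j' [Ej' ->]] := K j lt_j.
by apply/kappaP; exists j'; rewrite -Ej; split=> //; apply/eqP; rewrite eqn_modS Ej'.
Qed.

Lemma nth_star_cat (v : seq T) k r j : r <= size v ->
  j < size (flatten (nseq k v) ++ take r v) ->
  nth x0 (flatten (nseq k v) ++ take r v) j = nth x0 v (j %% size v).
Proof.
move=> le_r; elim: k j => [|k IH] j /=.
  by rewrite size_takel // => lt_j; rewrite nth_take // modn_small // (leq_trans lt_j).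
rewrite -catA nth_cat size_cat => lt_j; case: ltnP => [lt_jv|le_vj].
  by rewrite modn_small.
rewrite IH; last by rewrite ltn_subLR.
by rewrite -{2}(subnK le_vj) modnDr.
Qed.

Lemma kappa_star_cat_subset (v : seq T) k r i : d %| size v -> r <= size v ->
  kappa d (flatten (nseq k v) ++ take r v) i \subset kappa d v i.
Proof.
move=> dv le_r; apply/subsetP=> a /kappaP[j [lt_j Ej <-]].
have v_gt0 : 0 < size v.
  move: (lt_j) (le_r); rewrite size_cat size_flatten_nseq size_takel //.
  by case: (size v) => //; rewrite muln0 => lt_jr /(leq_trans lt_jr).
apply/kappaP; exists (j %% size v); rewrite ltn_mod nth_star_cat //.
by split=> //; rewrite -Ej; apply/eqP; rewrite eqn_modS (modn_dvdm _ dv).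
Qed.

Lemma subword_d_star_cat (u v : seq T) q : d %| size v ->
  (forall j, j < size u -> nth x0 u j \in kappa d v j.+1) ->
  q <= size v -> q = size u %[mod d] ->
  subword_d d u (flatten (nseq (size u) v) ++ take q v).
Proof.
move=> dv; elim/last_ind: u q => [|u a IH] q in_v le_q Eq.
  by apply: subword_d_nil; rewrite /= size_takel // /dvdn Eq mod0n.
have /kappaP[p [lt_p Ep Np]] : a \in kappa d v (size u).+1.
  by have := in_v (size u); rewrite size_rcons nth_rcons ltnn eqxx; apply.
have Ep' : p = size u %[mod d].
  by apply/eqP; rewrite -eqn_modS; apply/eqP.
have sub_u : subword_d d u (flatten (nseq (size u) v) ++ take p v).
  apply: IH (ltnW lt_p) Ep' => j lt_j.
  by have := in_v j; rewrite size_rcons nth_rcons lt_j ltnS; apply; exact: ltnW.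
have v_split : v = take p v ++ a :: drop p.+1 v.
  by rewrite -Np -drop_nth // cat_take_drop.
have gap : d %| size (drop p.+1 v ++ take q v).
  have Eq' : q = p.+1 %[mod d] by rewrite Eq size_rcons Ep.
  rewrite size_cat size_drop size_takel // /dvdn -modnDmr Eq' modnDmr.
  by rewrite subnK // (eqP dv).
rewrite size_rcons -cats1 -[_ ++ [:: a]]cats0.
have -> : flatten (nseq (size u).+1 v) ++ take q v =
          ((flatten (nseq (size u) v) ++ take p v) ++ [:: a]) ++
          (drop p.+1 v ++ take q v).
  by rewrite flatten_nseqSr -!catA; congr (_ ++ _); rewrite {1}v_split -catA.
by apply: subword_d_cat; [apply: subword_d_cat => //; exact: subword_d_refl
                          | exact: subword_d_nil].
Qed.

End Kappa.

Theorem mainTheorem13 (Sigma : finType) (d : nat) (v : seq Sigma) (r : nat) :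
  1 <= d -> d %| size v -> 0 < size v -> r <= d - 1 ->
  forall u : seq Sigma,
    down_d d (star_cat v (take r v)) u <->
    (size u = r %[mod d] /\
     forall i, 1 <= i <= d -> kappa d u i \subset kappa d v i).
Proof.
move=> d_gt0 dv v_gt0 le_r u.
have [x0 _] : exists x0 : Sigma, True by case: (v) v_gt0 => // a; exists a.
have le_rv : r <= size v by have := dvdn_leq v_gt0 dv; lia.
split=> [[s [[k ->] sub_us]] | [Eu sub_uv]].
  have emb := subword_d_mod_embed x0 sub_us.
  split=> [|i _].
    rewrite (proj1 emb) size_cat size_takel // size_flatten_nseq.
    by rewrite -modnDml (eqP (dvdn_mull k dv)).
  apply: subset_trans (mod_embed_kappa_subset i emb) _.
  exact: kappa_star_cat_subset.
exists (flatten (nseq (size u) v) ++ take r v); split; first by exists (size u).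
apply: subword_d_star_cat dv _ le_rv (esym Eu).
exact/(kappa_subsetP x0).
Qed.
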